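(* Let $N,K\ge 1$, $\mathbf{g}\in\mathbb{C}^{N}$, $\mathbf{h}_{r,k}\in\mathbb{C}^{N}$, $h_{d,k}\in\mathbb{C}$ ($k=1,\dots,K$), with all entries of $\mathbf{g}$ and every $\mathbf{h}_{r,k}$ nonzero and every $h_{d,k}\ne0$. Let $\sigma^2,\sigma_r^2,P_r,T_{\max}>0$ and $E_k>0$. Put $\mathbf{q}_k=\mathrm{diag}(\mathbf{g}^H)\mathbf{h}_{r,k}$, $\mathbf{G}=\mathrm{diag}(|[\mathbf{g}]_1|^2,\dots,|[\mathbf{g}]_N|^2)$, $\mathbf{H}_{r,k}=\mathrm{diag}(|[\mathbf{h}_{r,k}]_1|^2,\dots,|[\mathbf{h}_{r,k}]_N|^2)$. Consider $$\max_{\tau,\{p_k\},\mathbf{v}}\ \tau\log_2\!\Big(1+\frac{\sum_{k=1}^K p_k|h_{d,k}+\mathbf{v}^H\mathbf{q}_k|^2}{\sigma^2+\sigma_r^2\mathbf{v}^H\mathbf{G}\mathbf{v}}\Big)$$ over $\tau\in\mathbb{R}$, $p_k\in\mathbb{R}$, $\mathbf{v}\in\mathbb{C}^N$, subject to $\tau p_k\le E_k$ for all $k$; $\tau\le T_{\max}$; $\tau\ge0$, $p_k\ge 0$ for all $k$; and $\sum_{k=1}^K p_k\mathbf{v}^H\mathbf{H}_{r,k}\mathbf{v}+\sigma_r^2\|\mathbf{v}\|^2\le P_r$. Then at any optimal solution, $\tau=T_{\max}$.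
   Context: This is the sum-throughput maximization for active-IRS-aided NOMA uplink: all devices transmit simultaneously for time $\tau$ with powers $p_k$ and energies $E_k$, sharing one IRS reflection/amplification vector $\mathbf{v}$; $P_r$ is the IRS amplification power budget. *)

From HB Require Import structures.
From mathcomp Require Import all_boot all_order all_algebra.
From mathcomp Require Import reals exp.
From mathcomp Require Import complex.
Set Implicit Arguments. Unset Strict Implicit. Unset Printing Implicit Defensive.
Import Order.TTheory GRing.Theory Num.Theory.
Local Open Scope ring_scope.
Local Open Scope complex_scope.

Section Defs.
Variable R : realType.

Definition sqmod (z : R[i]) : R := (complex.Re z) ^+ 2 + (complex.Im z) ^+ 2.

Definition log2 (x : R) : R := ln x / ln 2.

Variables (N K : nat).

Definition hdot (a b : 'I_N -> R[i]) : R[i] := \sum_(i < N) (a i)^* * b i.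

Definition qvec (g hr : 'I_N -> R[i]) : 'I_N -> R[i] := fun i => (g i)^* * hr i.

(* v^H diag(|w_1|^2,...,|w_N|^2) v *)
Definition wquad (w v : 'I_N -> R[i]) : R := \sum_(i < N) sqmod (w i) * sqmod (v i).

Definition sqnorm (v : 'I_N -> R[i]) : R := \sum_(i < N) sqmod (v i).

Variables (g : 'I_N -> R[i]) (hr : 'I_K -> 'I_N -> R[i]) (hd : 'I_K -> R[i])
          (sigma2 sigmar2 Pr Tmax : R) (E : 'I_K -> R).

Definition objective (tau : R) (p : 'I_K -> R) (v : 'I_N -> R[i]) : R :=
  tau * log2 (1 + (\sum_(k < K) p k * sqmod (hd k + hdot v (qvec g (hr k))))
                  / (sigma2 + sigmar2 * wquad g v)).

Definition feasible (tau : R) (p : 'I_K -> R) (v : 'I_N -> R[i]) : Prop :=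
  [/\ forall k, tau * p k <= E k,
      tau <= Tmax,
      0 <= tau,
      forall k, 0 <= p k &
      \sum_(k < K) p k * wquad (hr k) v + sigmar2 * sqnorm v <= Pr].

Definition optimal (tau : R) (p : 'I_K -> R) (v : 'I_N -> R[i]) : Prop :=
  feasible tau p v /\
  forall tau' p' v', feasible tau' p' v' -> objective tau' p' v' <= objective tau p v.

End Defs.

(** If [tau < Tmax], stretch the transmission to [Tmax] and scale every power
    by [a = tau / Tmax]: energies and the IRS power budget are still respected,
    the SNR is multiplied by [a], and the throughput changes from
    [Tmax * a * log2 (1 + x)] to [Tmax * log2 (1 + a * x)], which is strictly
    larger by strict concavity of [ln] as soon as [x > 0].  The SNR of an
    optimum is indeed positive, since switching the IRS off and sending at full
    energy already gives a positive throughput. *)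
From HB Require Import structures.
From mathcomp Require Import all_boot all_order all_algebra.
From mathcomp Require Import reals exp.
From mathcomp Require Import complex ring lra.
Set Implicit Arguments. Unset Strict Implicit. Unset Printing Implicit Defensive.
Import Order.TTheory GRing.Theory Num.Theory.
Local Open Scope ring_scope.
Local Open Scope complex_scope.

Section StrictConcavityLn.
Variable R : realType.
Implicit Types t x y z : R.

Lemma ln_lt_subr1 y : 0 < y -> y != 1 -> ln y < y - 1.
Proof.
move=> y_gt0 y_neq1.
rewrite -ltr_expR lnK ?posrE //.
by rewrite -[X in X < _](addrNK 1) addrC expR_gt1Dx // subr_eq0.
Qed.

Lemma ln_lt_tangent y z : 0 < y -> 0 < z -> z != y ->
  ln z < ln y + (z - y) / y.
Proof.
move=> y_gt0 z_gt0 zy.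
rewrite -ltrBlDl -ln_div ?posrE //.
have -> : (z - y) / y = z / y - 1 by rewrite mulrBl divff ?gt_eqF.
rewrite ln_lt_subr1 ?divr_gt0 //; apply: contra zy => /eqP zy1.
by rewrite -[z](divfK (lt0r_neq0 y_gt0)) zy1 mul1r.
Qed.

Lemma strict_concave_ln t x y : 0 < t < 1 -> 0 < x -> 0 < y -> x != y ->
  t * ln x + (1 - t) * ln y < ln (t * x + (1 - t) * y).
Proof.
move=> /andP[t_gt0 t_lt1] x_gt0 y_gt0 xy.
set m := t * x + (1 - t) * y.
have t1_gt0 : 0 < 1 - t by rewrite subr_gt0.
have m_gt0 : 0 < m by rewrite addr_gt0 ?mulr_gt0.
have dx : x - m = (1 - t) * (x - y) by rewrite /m; ring.
have dy : y - m = t * (y - x) by rewrite /m; ring.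
have xm : x != m.
  rewrite -subr_eq0 dx; apply: mulf_neq0; first exact: lt0r_neq0.
  by rewrite subr_eq0.
have ym : y != m.
  rewrite -subr_eq0 dy; apply: mulf_neq0; first exact: lt0r_neq0.
  by rewrite subr_eq0 eq_sym.
have := @ln_lt_tangent m x m_gt0 x_gt0 xm; rewrite dx.
have := @ln_lt_tangent m y m_gt0 y_gt0 ym; rewrite dy.
nra.
Qed.
End StrictConcavityLn.

Lemma ln1D_scale_lt (R : realType) (t x : R) : 0 < t < 1 -> 0 < x ->
  t * ln (1 + x) < ln (1 + t * x).
Proof.
move=> t01 x_gt0.
have := @strict_concave_ln R t (1 + x) 1 t01 (addr_gt0 ltr01 x_gt0) ltr01.
have -> : t * (1 + x) + (1 - t) * 1 = 1 + t * x by ring.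
rewrite ln1 mulr0 addr0; apply.
by rewrite gt_eqF // ltrDl.
Qed.

Section SqMod.
Variable R : realType.
Implicit Types z : R[i].

Lemma sqmod_ge0 z : 0 <= sqmod z.
Proof. by rewrite /sqmod addr_ge0 ?sqr_ge0. Qed.

Lemma sqmod_gt0 z : z != 0 -> 0 < sqmod z.
Proof.
case: z => a b z_neq0; rewrite lt_def sqmod_ge0 andbT.
apply: contra z_neq0; rewrite /sqmod paddr_eq0 ?sqr_ge0 // !sqrf_eq0.
by case/andP => /eqP /= -> /eqP ->.
Qed.

Lemma sqmod0 : sqmod (0 : R[i]) = 0.
Proof. by rewrite /sqmod /= expr0n addr0. Qed.

Variable N : nat.
Implicit Types w v : 'I_N -> R[i].

Lemma wquad_ge0 w v : 0 <= wquad w v.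
Proof. by apply: sumr_ge0 => i _; rewrite mulr_ge0 ?sqmod_ge0. Qed.

Lemma wquad0 w : wquad w (fun _ => 0) = 0.
Proof. by apply: big1 => i _; rewrite sqmod0 mulr0. Qed.

Lemma sqnorm0 : sqnorm (fun _ : 'I_N => 0 : R[i]) = 0.
Proof. by apply: big1 => i _; rewrite sqmod0. Qed.

Lemma hdot0 w : hdot (fun _ => 0) w = 0.
Proof. by apply: big1 => i _; rewrite conjC0 mul0r. Qed.

End SqMod.

Section ThroughputProblem.
Variables (R : realType) (N K : nat).
Variables (g : 'I_N -> R[i]) (hr : 'I_K -> 'I_N -> R[i]) (hd : 'I_K -> R[i]).
Variables (sigma2 sigmar2 Pr Tmax : R) (E : 'I_K -> R).
Hypotheses (sigma2_gt0 : 0 < sigma2) (sigmar2_ge0 : 0 <= sigmar2).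

Local Notation objective := (objective g hr hd sigma2 sigmar2).
Local Notation feasible := (feasible hr sigmar2 Pr Tmax E).

Definition snr (p : 'I_K -> R) (v : 'I_N -> R[i]) : R :=
  (\sum_(k < K) p k * sqmod (hd k + hdot v (qvec g (hr k))))
  / (sigma2 + sigmar2 * wquad g v).

Lemma objectiveE tau p v : objective tau p v = tau * log2 (1 + snr p v).
Proof. by []. Qed.

Lemma noise_gt0 v : 0 < sigma2 + sigmar2 * wquad g v.
Proof. by rewrite ltr_wpDr ?mulr_ge0 ?wquad_ge0. Qed.

Lemma snr_ge0 p v : (forall k, 0 <= p k) -> 0 <= snr p v.
Proof.
move=> p_ge0; rewrite divr_ge0 ?(ltW (noise_gt0 v)) //.
by apply: sumr_ge0 => k _; rewrite mulr_ge0 ?sqmod_ge0.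
Qed.

Lemma snrZ a p v : snr (fun k => a * p k) v = a * snr p v.
Proof.
rewrite /snr mulrA; congr (_ / _); rewrite mulr_sumr.
by apply: eq_bigr => k _; rewrite mulrA.
Qed.

Lemma objective_gt0 tau p v : 0 <= tau -> (forall k, 0 <= p k) ->
  0 < objective tau p v -> 0 < tau /\ 0 < snr p v.
Proof.
move=> tau_ge0 p_ge0 obj_gt0.
have tau_gt0 : 0 < tau.
  rewrite lt_def tau_ge0 andbT; apply: contraTneq obj_gt0 => ->.
  by rewrite objectiveE mul0r ltxx.
split=> //; rewrite lt_def snr_ge0 // andbT; apply: contraTneq obj_gt0 => snr0.
by rewrite objectiveE snr0 addr0 /log2 ln1 mul0r mulr0 ltxx.
Qed.

Lemma feasible_stretch tau p v : feasible tau p v -> 0 < tau ->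
  feasible Tmax (fun k => tau / Tmax * p k) v.
Proof.
case=> energy tau_le _ p_ge0 power tau_gt0.
have T_gt0 : 0 < Tmax := lt_le_trans tau_gt0 tau_le.
have a_ge0 : 0 <= tau / Tmax by rewrite divr_ge0 ?ltW.
have a_le1 : tau / Tmax <= 1 by rewrite ler_pdivrMr // mul1r.
split=> [k|||k|] //.
- by rewrite mulrA (mulrC Tmax) divfK ?lt0r_neq0.
- exact: ltW.
- by rewrite mulr_ge0.
apply: le_trans power; rewrite lerD2r; apply: ler_sum => k _.
by rewrite -mulrA ler_piMl ?mulr_ge0 ?wquad_ge0.
Qed.

Lemma objective_stretch_gt tau p v : 0 < tau < Tmax -> 0 < snr p v ->
  objective tau p v < objective Tmax (fun k => tau / Tmax * p k) v.
Proof.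
move=> /andP[tau_gt0 tau_lt] snr_gt0.
have T_gt0 := lt_trans tau_gt0 tau_lt.
have a01 : 0 < tau / Tmax < 1 by rewrite divr_gt0 ?ltr_pdivrMr ?mul1r.
rewrite !objectiveE snrZ /log2 (mulrA tau) (mulrA Tmax).
rewrite ltr_pM2r ?invr_gt0 ?ln_gt0 ?ltr1n //.
have -> : tau * ln (1 + snr p v) = Tmax * (tau / Tmax * ln (1 + snr p v)).
  by rewrite mulrA (mulrC Tmax) divfK ?lt0r_neq0.
by rewrite ltr_pM2l // ln1D_scale_lt.
Qed.

Lemma feasible_irs_off : 0 < Tmax -> (forall k, 0 <= E k) -> 0 <= Pr ->
  feasible Tmax (fun k => E k / Tmax) (fun _ => 0).
Proof.
move=> T_gt0 E_ge0 Pr_ge0.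
split=> [k|||k|] //.
- by rewrite mulrC divfK ?lt0r_neq0.
- exact: ltW.
- by rewrite divr_ge0 ?E_ge0 ?ltW.
by rewrite sqnorm0 mulr0 addr0 big1 // => k _; rewrite wquad0 mulr0.
Qed.

Lemma objective_irs_off_gt0 k0 : 0 < Tmax -> (forall k, 0 <= E k) ->
  0 < E k0 -> hd k0 != 0 -> 0 < objective Tmax (fun k => E k / Tmax) (fun _ => 0).
Proof.
move=> T_gt0 E_ge0 Ek0_gt0 hdk0_neq0.
rewrite objectiveE /log2 mulr_gt0 ?divr_gt0 ?ln_gt0 ?ltr1n // ltrDl.
rewrite /snr wquad0 mulr0 addr0 divr_gt0 // (bigD1 k0) //= hdot0 addr0.
rewrite ltr_pwDl ?mulr_gt0 ?divr_gt0 ?invr_gt0 ?sqmod_gt0 //.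
by apply: sumr_ge0 => k _; rewrite mulr_ge0 ?divr_ge0 ?E_ge0 ?sqmod_ge0 ?ltW.
Qed.

End ThroughputProblem.

Theorem lemma2 (R : realType) (N K : nat) (hN : (0 < N)%N) (hK : (0 < K)%N)
  (g : 'I_N -> R[i]) (hr : 'I_K -> 'I_N -> R[i]) (hd : 'I_K -> R[i])
  (hg : forall n, g n != 0) (hhr : forall k n, hr k n != 0)
  (hhd : forall k, hd k != 0)
  (sigma2 sigmar2 Pr Tmax : R) (E : 'I_K -> R)
  (hs : 0 < sigma2) (hsr : 0 < sigmar2) (hPr : 0 < Pr) (hT : 0 < Tmax)
  (hE : forall k, 0 < E k)
  (tau : R) (p : 'I_K -> R) (v : 'I_N -> R[i]) :
  optimal g hr hd sigma2 sigmar2 Pr Tmax E tau p v -> tau = Tmax.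
Proof.
move=> [feas opt]; case: (feas) => _ tau_le tau_ge0 p_ge0 _.
have hsr0 := ltW hsr.
have E_ge0 k := ltW (hE k).
have obj_gt0 : 0 < objective g hr hd sigma2 sigmar2 tau p v.
  have feas0 := feasible_irs_off hr sigmar2 hT E_ge0 (ltW hPr).
  apply: lt_le_trans (opt _ _ _ feas0).
  exact: (objective_irs_off_gt0 g hr sigmar2 hs hT E_ge0 (hE (Ordinal hK)) (hhd _)).
have [tau_gt0 snr_gt0] := objective_gt0 hs hsr0 tau_ge0 p_ge0 obj_gt0.
apply/eqP; rewrite eq_le tau_le leNgt; apply/negP => tau_lt.
have := opt _ _ _ (feasible_stretch feas tau_gt0).
by rewrite leNgt objective_stretch_gt ?tau_gt0.
Qed.
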